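(* Let $a\in(0,1)$, $\sigma^2>0$, $M\ge1$, and let $\mu$ satisfy $0<\mu\sigma^2<2$. Then all eigenvalues of $$E_d=\begin{bmatrix}1-\mu\sigma^2&0&0\\0&(1-\mu\sigma^2)a&-\sqrt{2-2a}\\0&(1-\mu\sigma^2)a\sqrt{\tfrac{1-a}{2}}&a\end{bmatrix}$$ lie strictly inside the unit circle, and consequently the exact diffusion error $\widetilde{\mathcal{Z}}_i=[\widetilde{\mathcal{W}}_i;\widetilde{\mathcal{Y}}_i]$, which evolves as $\widetilde{\mathcal{Z}}_i=(Q_d\otimes I_M)\widetilde{\mathcal{Z}}_{i-1}$ with $\widetilde{\mathcal{Y}}_0\in\mathrm{range}(V\otimes I_M)$, converges to $0$.
   Context: Two-agent mean-square-error setting with Hessians $R_{u,1}=R_{u,2}=\sigma^2I_M$. $A=\begin{bmatrix}a&1-a\\1-a&a\end{bmatrix}$, $P=\frac12I_2$, $\bar A=(I_2+A)/2$; the symmetric positive semidefinite matrix $(P-AP)/2$ has eigendecomposition $U\Sigma U^{\mathsf T}$ and $V=U\Sigma^{1/2}U^{\mathsf T}$. $Q_d=\begin{bmatrix}(1-\mu\sigma^2)\bar A&-2V\\(1-\mu\sigma^2)V\bar A&\bar A\end{bmatrix}\in\mathbb{R}^{4\times4}$. The error vector $\widetilde{\mathcal{Z}}_i\in\mathbb{R}^{4M}$ consists of $\widetilde{\mathcal{W}}_i\in\mathbb{R}^{2M}$ followed by $\widetilde{\mathcal{Y}}_i\in\mathbb{R}^{2M}$, and the initial dual error $\widetilde{\mathcal{Y}}_0$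 lies in the range of $V\otimes I_M$ (as it does for the exact diffusion initialization $\mathcal{Y}_0=(V\otimes I_M)\mathcal{W}_0$ and dual optimum in that range). *)

From HB Require Import structures.
From mathcomp Require Import all_boot all_order all_algebra.
From mathcomp Require Import all_classical all_reals all_analysis.
From mathcomp Require Import complex mxtens.
Set Implicit Arguments. Unset Strict Implicit. Unset Printing Implicit Defensive.
Import Order.TTheory GRing.Theory Num.Theory.
Local Open Scope ring_scope.

Definition Amx (R : realType) (a : R) : 'M[R]_2 :=
  \matrix_(i < 2, j < 2) (if i == j then a else 1 - a).

Definition Pmx (R : realType) : 'M[R]_2 := (2^-1 : R)%:M.

Definition Abar (R : realType) (a : R) : 'M[R]_2 := 2^-1 *: (1%:M + Amx a).

Definition PAPhalf (R : realType) (a : R) : 'M[R]_2 :=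
  2^-1 *: (Pmx R - Amx a *m Pmx R).

(* V = U Sigma^{1/2} U^T (Sigma diagonal with nonnegative entries, so its
   square root is the entrywise square root) *)
Definition Vmx (R : realType) (U S : 'M[R]_2) : 'M[R]_2 :=
  U *m map_mx Num.sqrt S *m U^T.

Definition eigdecomp (R : realType) (X U S : 'M[R]_2) : Prop :=
  [/\ U *m U^T = 1%:M, U^T *m U = 1%:M, is_diag_mx S,
      (forall i, 0 <= S i i) & U *m S *m U^T = X].

(* Q_d (4 x 4, as a 2x2 block matrix), with Hessians sigma^2 I *)
Definition Qd (R : realType) (a mu s2 : R) (V : 'M[R]_2) : 'M[R]_(2 + 2) :=
  block_mx ((1 - mu * s2) *: Abar a) (- (2 : R) *: V)
           ((1 - mu * s2) *: (V *m Abar a)) (Abar a).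

Definition Ed (R : realType) (a mu s2 : R) : 'M[R]_3 :=
  \matrix_(i < 3, j < 3) nth (0 : R) (nth [::] [:: [:: 1 - mu * s2; 0; 0];
        [:: 0; (1 - mu * s2) * a; - Num.sqrt (2 - 2 * a)];
        [:: 0; (1 - mu * s2) * a * Num.sqrt ((1 - a) / 2); a]] i) j.

(* Dual part Y (last 2M entries) of Z = [W; Y] in R^{4M} *)
Definition Ypart (R : realType) (M : nat) (z : 'cV[R]_(4 * M)) : 'cV[R]_(2 * M) :=
  dsubmx (castmx (mulnDl 2 2 M, erefl 1%N) z : 'cV[R]_(2 * M + 2 * M)).

From HB Require Import structures.
From mathcomp Require Import all_boot all_order all_algebra.
From mathcomp Require Import all_classical all_reals all_analysis.
From mathcomp Require Import complex mxtens.
From mathcomp Require Import ring lra.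
Set Implicit Arguments. Unset Strict Implicit. Unset Printing Implicit Defensive.
Import Order.TTheory GRing.Theory Num.Theory.
Local Open Scope ring_scope.
Local Open Scope complex_scope.
Import numFieldNormedType.Exports.
Local Open Scope classical_set_scope.

(* With c := 1 - mu sigma^2, E_d is block diagonal: the eigenvalue c and a 2x2
   block of trace c a + a and determinant c a, whose eigenvalues lie in the unit
   disc by Jury's test.  For the recursion, V = (P - AP)/2 divided by
   sqrt((1 - a)/2), so V and Abar share the eigenvectors (1,1) and (1,-1).  On
   the (1,1) mode the primal error contracts by c and the dual error is
   constant, hence zero because Y_0 lies in the range of V.  On the (1,-1) mode
   the primal and dual errors evolve by the 2x2 block of E_d, so each satisfies
   a Jury-stable second-order linear recurrence and tends to 0. *)

Lemma cvg0_perturbed_geometric (R : realType) (c : R) (e u : nat -> R) :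
  `|c| < 1 -> u n @[n --> \oo] --> 0 -> (forall n, e n.+1 = c * e n + u n) ->
  e n @[n --> \oo] --> 0.
Proof.
move=> hc hu he; apply/cvgr0Pnorm_lt => eps eps0.
set rho := `|c|.
have eta0 : 0 < eps * (1 - rho) / 2 by rewrite divr_gt0 // mulr_gt0 // subr_gt0.
have [N _ uN] := cvgr0_norm_lt _ hu _ eta0.
have bound k : `|e (N + k)%N| <= rho ^+ k * `|e N| + eps / 2.
  elim: k => [|k IH]; first by rewrite addn0 expr0 mul1r lerDl; lra.
  rewrite addnS he; apply: le_trans (ler_normD _ _) _.
  have uNk : `|u (N + k)%N| < eps * (1 - rho) / 2 by apply: uN; rewrite /= leq_addr.
  have : rho * `|e (N + k)%N| <= rho * (rho ^+ k * `|e N| + eps / 2).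
    by rewrite ler_wpM2l ?normr_ge0.
  rewrite normrM -/rho exprS; have := normr_ge0 c; lra.
have geo : (fun k => rho ^+ k * `|e N|) @ \oo --> 0.
  rewrite -(mul0r `|e N|); apply: cvgMr_tmp.
  by apply: cvg_expr; rewrite /rho normr_id.
have eps2 : 0 < eps / 2 by rewrite divr_gt0.
have [N2 _ geoN2] := cvgr0_norm_lt _ geo _ eps2.
exists (N + N2)%N => // n /= Nn.
have NN2 : (N <= n)%N by apply: leq_trans Nn; rewrite leq_addr.
have := bound (n - N)%N; rewrite subnKC //.
have := geoN2 (n - N)%N; rewrite /= leq_subRL // => /(_ Nn).
rewrite ger0_norm ?mulr_ge0 ?exprn_ge0 ?normr_ge0 //; lra.
Qed.

(* Jury's criterion: both roots of [X ^+ 2 - t X + d] lie in the open unit disc. *)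
Definition schur_stable2 {R : numDomainType} (t d : R) : Prop :=
  [/\ 0 < 1 - t + d, 0 < 1 + t + d & `|d| < 1].

Lemma real_quadratic_root_lt1 (R : realFieldType) (t d x : R) :
  schur_stable2 t d -> x ^+ 2 - t * x + d = 0 -> `|x| < 1.
Proof.
move=> [h1 h2]; rewrite !ltr_norml => /andP[dm dM] hx.
have f1 : 0 < (1 - x) * (1 - (t - x)) by nra.
have f2 : 0 < (1 + x) * (1 + (t - x)) by nra.
apply/andP; split; nra.
Qed.

Lemma quadratic_root_norm_lt1 (R : realType) (t d : R) (lam : R[i]) :
  schur_stable2 t d -> lam ^+ 2 - t%:C * lam + d%:C = 0 -> `|lam| < 1.
Proof.
move=> st; have [_ _] := st; rewrite ltr_norml => /andP[_ dM].
case: lam => x y; rewrite !expr2; simpc => /eqP.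
rewrite eq_complex /= => /andP[/eqP re /eqP im].
have /eqP : y * (2 * x - t) = 0 by rewrite -im; ring.
rewrite mulf_eq0 => /orP[/eqP y0 | /eqP x_half].
  rewrite y0 expr0n /= addr0 sqrtr_sqr.
  by apply: (real_quadratic_root_lt1 st); rewrite expr2 -[RHS]re y0; ring.
rewrite -[X in _ < X]sqrtr1 ltr_sqrt ?ltr01 //; nra.
Qed.

Lemma rec2_cvg0_real_roots (R : realType) (t d : R) (u : nat -> R) :
  schur_stable2 t d -> 0 <= t ^+ 2 - 4 * d ->
  (forall n, u n.+2 = t * u n.+1 - d * u n) -> u n @[n --> \oo] --> 0.
Proof.
move=> st disc0 hu.
set r := Num.sqrt (t ^+ 2 - 4 * d).
have ed : d = (t ^+ 2 - r ^+ 2) / 4 by rewrite sqr_sqrtr //; field.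
set l1 := (t + r) / 2; set l2 := (t - r) / 2.
have root_l1 : l1 ^+ 2 - t * l1 + d = 0 by rewrite ed /l1; field.
have root_l2 : l2 ^+ 2 - t * l2 + d = 0 by rewrite ed /l2; field.
pose v n := u n.+1 - l2 * u n.
have hv : v n @[n --> \oo] --> 0.
  apply: (@cvg0_perturbed_geometric _ l1 v (fun=> 0)).
  - exact: real_quadratic_root_lt1 st root_l1.
  - exact: cvg_cst.
  by move=> n; rewrite /v hu addr0 /l1 /l2 ed; field.
apply: (@cvg0_perturbed_geometric _ l2 u v _ hv).
  exact: real_quadratic_root_lt1 st root_l2.
by move=> n; rewrite /v; ring.
Qed.

Lemma rec2_cvg0_complex_roots (R : realType) (t d : R) (u : nat -> R) :
  `|d| < 1 -> t ^+ 2 - 4 * d < 0 ->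
  (forall n, u n.+2 = t * u n.+1 - d * u n) -> u n @[n --> \oo] --> 0.
Proof.
move=> hd disc0 hu.
(* This quadratic form in [(u n.+1, u n)] is multiplied by [d] at each step and
   dominates [k * u n ^+ 2] because the discriminant is negative. *)
pose F n := u n.+1 ^+ 2 - t * u n.+1 * u n + d * u n ^+ 2.
have F0 : F n @[n --> \oo] --> 0.
  apply: (@cvg0_perturbed_geometric _ d F (fun=> 0) hd); first exact: cvg_cst.
  by move=> n; rewrite /F hu addr0; ring.
set k := d - t ^+ 2 / 4.
have k0 : 0 < k by rewrite /k; lra.
have Fu n : k * u n ^+ 2 <= F n.
  have := sqr_ge0 (u n.+1 - t * u n / 2); rewrite /F /k; lra.
apply/cvgr0Pnorm_lt => eps eps0.
have [N _ FN] := cvgr0_norm_lt _ F0 _ (mulr_gt0 k0 (exprn_gt0 2 eps0)).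
exists N => // n /= Nn.
have : u n ^+ 2 < eps ^+ 2.
  rewrite -(ltr_pM2l k0); apply: le_lt_trans (Fu n) _.
  exact: le_lt_trans (ler_norm _) (FN n Nn).
rewrite ltr_norml => sq_lt; apply/andP; split; nra.
Qed.

Lemma rec2_cvg0 (R : realType) (t d : R) (u : nat -> R) :
  schur_stable2 t d -> (forall n, u n.+2 = t * u n.+1 - d * u n) ->
  u n @[n --> \oo] --> 0.
Proof.
move=> st; have [disc0 | disc0] := leP 0 (t ^+ 2 - 4 * d).
  exact: rec2_cvg0_real_roots.
by have [_ _ hd] := st; exact: rec2_cvg0_complex_roots.
Qed.

Lemma left_eigen2_char (F : idomainType) (b11 b12 b21 b22 lam v1 v2 : F) :
  (v1 != 0) || (v2 != 0) ->
  v1 * b11 + v2 * b21 = lam * v1 -> v1 * b12 + v2 * b22 = lam * v2 ->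
  lam ^+ 2 - (b11 + b22) * lam + (b11 * b22 - b12 * b21) = 0.
Proof.
set chi := _ - _ + _ => v_nz e1 e2.
have chi_v1 : chi * v1 = 0.
  transitivity ((lam - b22) * (lam * v1 - (v1 * b11 + v2 * b21))
                + b21 * (lam * v2 - (v1 * b12 + v2 * b22))); first by rewrite /chi; ring.
  by rewrite e1 e2 !subrr !mulr0 addr0.
have chi_v2 : chi * v2 = 0.
  transitivity ((lam - b11) * (lam * v2 - (v1 * b12 + v2 * b22))
                + b12 * (lam * v1 - (v1 * b11 + v2 * b21))); first by rewrite /chi; ring.
  by rewrite e1 e2 !subrr !mulr0 addr0.
case/orP: v_nz => [v1_nz | v2_nz].
  by move/eqP: chi_v1; rewrite mulf_eq0 (negPf v1_nz) orbF => /eqP.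
by move/eqP: chi_v2; rewrite mulf_eq0 (negPf v2_nz) orbF => /eqP.
Qed.

Section LinearSystem2.
Variables (R : realType) (b11 b12 b21 b22 : R) (x y : nat -> R).
Hypothesis hx : forall n, x n.+1 = b11 * x n + b12 * y n.
Hypothesis hy : forall n, y n.+1 = b21 * x n + b22 * y n.

Let t := b11 + b22.
Let d := b11 * b22 - b12 * b21.

Lemma system2_recl n : x n.+2 = t * x n.+1 - d * x n.
Proof. by rewrite !hx hy /t /d; ring. Qed.

Lemma system2_recr n : y n.+2 = t * y n.+1 - d * y n.
Proof. by rewrite !hy hx /t /d; ring. Qed.

Lemma system2_cvg0 : schur_stable2 t d ->
  x n @[n --> \oo] --> 0 /\ y n @[n --> \oo] --> 0.
Proof.
by move=> st; split; apply: (rec2_cvg0 st); [exact: system2_recl | exact: system2_recr].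
Qed.

End LinearSystem2.

Lemma cvg0_sum_diff (R : realType) (x y : nat -> R) :
  (x n + y n) @[n --> \oo] --> 0 -> (x n - y n) @[n --> \oo] --> 0 ->
  x n @[n --> \oo] --> 0 /\ y n @[n --> \oo] --> 0.
Proof.
move=> hs hd.
have half_sum (f g : nat -> R) : f n @[n --> \oo] --> 0 -> g n @[n --> \oo] --> 0 ->
    (2^-1 * (f n + g n)) @[n --> \oo] --> 0.
  move=> hf hg; rewrite -(mulr0 2^-1) -(addr0 0).
  exact: cvgMl_tmp (cvgD hf hg).
split.
  apply: cvg_trans (half_sum _ _ hs hd); apply: near_eq_cvg; near=> n.
  by field.
have hd' : (- (x n - y n)) @[n --> \oo] --> 0 by rewrite -oppr0; exact: cvgN.
apply: cvg_trans (half_sum _ _ hs hd'); apply: near_eq_cvg; near=> n.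
by field.
Unshelve. all: by end_near.
Qed.

Lemma cvg0_mx_entries (R : realType) (m n : nat) (Z : nat -> 'M[R]_(m, n)) :
  (forall i j, Z k i j @[k --> \oo] --> 0) -> Z k @[k --> \oo] --> (0 : 'M[R]_(m, n)).
Proof.
move=> hZ; apply/cvgr0Pnorm_lt => eps eps0.
have : \forall k \near \oo, forall i j, `|Z k i j| < eps.
  by apply: filter_forall => i; apply: filter_forall => j; exact: cvgr0_norm_lt.
apply: filterS => k Zk; rewrite /Num.norm /= mx_normrE.
by apply: bigmax_lt => // -[i j] _; exact: Zk.
Qed.

Lemma schur_stable2_diffusion (R : realType) (c a : R) :
  `|c| < 1 -> 0 < a -> a < 1 -> schur_stable2 (c * a + a) (c * a).
Proof.
move=> c_lt1 a_gt0 a_lt1; have := c_lt1; rewrite ltr_norml => /andP[c_gtN1 _].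
split; [nra | nra |].
by rewrite normrM (gtr0_norm a_gt0); nra.
Qed.

Lemma big_ord2 (V : nmodType) (F : 'I_2 -> V) : \sum_(l < 2) F l = F ord0 + F ord_max.
Proof. by rewrite big_ord_recl big_ord1; congr (_ + F _); apply: val_inj. Qed.

Lemma ord2_cases (i : 'I_2) : i = ord0 \/ i = ord_max.
Proof. by case: i => -[|[|//]] hi; [left | right]; apply: val_inj. Qed.

Lemma Abar_entry (R : realType) (a : R) (i j : 'I_2) :
  Abar a i j = if i == j :> nat then (1 + a) / 2 else (1 - a) / 2.
Proof.
rewrite !mxE -[i == j]/(i == j :> nat).
by case: (i == j :> nat); rewrite /= ?mulr1n ?mulr0n; field.
Qed.

Lemma PAPhalf_entry (R : realType) (a : R) (i j : 'I_2) :
  PAPhalf a i j = if i == j :> nat then (1 - a) / 4 else - ((1 - a) / 4).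
Proof.
rewrite /PAPhalf /Pmx mul_mx_scalar !mxE -[i == j]/(i == j :> nat).
by case: (i == j :> nat); rewrite /= ?mulr1n ?mulr0n; field.
Qed.

Lemma PAPhalf_sqr (R : realType) (a : R) :
  PAPhalf a *m PAPhalf a = ((1 - a) / 2) *: PAPhalf a.
Proof.
apply/matrixP => i j; rewrite [LHS]mxE [RHS]mxE big_ord2 !PAPhalf_entry.
by case: (ord2_cases i) => ->; case: (ord2_cases j) => -> /=; field.
Qed.

Lemma diag_mx_sqr_entry (R : pzRingType) (n : nat) (D : 'M[R]_n) (i : 'I_n) :
  is_diag_mx D -> (D *m D) i i = D i i ^+ 2.
Proof.
move/is_diag_mxP => Ddiag; rewrite mxE (bigD1 i) //= big1 ?addr0 ?expr2 //.
by move=> l li; rewrite (Ddiag i l) ?mul0r // eq_sym.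
Qed.

(* [X *m X = k *: X] confines the eigenvalues of [X] to [0] and [k], where
   [Num.sqrt] agrees with [x / Num.sqrt k]. *)
Lemma Vmx_of_sqr (R : realType) (X U S : 'M[R]_2) (k : R) :
  0 < k -> X *m X = k *: X -> eigdecomp X U S -> Vmx U S = (Num.sqrt k)^-1 *: X.
Proof.
move=> k_gt0 XX [UUt UtU Sdiag _ USU].
have eS : S = U^T *m X *m U by rewrite -USU !mulmxA UtU mul1mx -!mulmxA UtU mulmx1.
have SS : S *m S = k *: S.
  rewrite {1 2}eS -!mulmxA (mulmxA U) UUt mul1mx (mulmxA X) XX.
  by rewrite -scalemxAl -scalemxAr mulmxA -eS.
have sqrtS : map_mx Num.sqrt S = (Num.sqrt k)^-1 *: S.
  apply/matrixP => i j; rewrite !mxE.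
  have [<- | ij] := eqVneq i j; last first.
    by move/is_diag_mxP: Sdiag => /(_ i j ij) ->; rewrite sqrtr0 mulr0.
  have : S i i * (S i i - k) = 0.
    by rewrite mulrBr -expr2 -diag_mx_sqr_entry // SS mxE mulrC subrr.
  move/eqP; rewrite mulf_eq0 subr_eq0 => /orP[/eqP -> | /eqP ->].
    by rewrite sqrtr0 mulr0.
  have sk_gt0 : 0 < Num.sqrt k by rewrite sqrtr_gt0.
  by rewrite -[X in _ = _ * X](sqr_sqrtr (ltW k_gt0)) expr2 mulKf ?gt_eqF.
by rewrite /Vmx sqrtS -scalemxAr -scalemxAl USU.
Qed.

Lemma Vmx_entry (R : realType) (a : R) (U S : 'M[R]_2) :
  0 < a -> a < 1 -> eigdecomp (PAPhalf a) U S -> forall i j : 'I_2,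
  Vmx U S i j = if i == j :> nat then Num.sqrt ((1 - a) / 2) / 2
                else - (Num.sqrt ((1 - a) / 2) / 2).
Proof.
move=> a_gt0 a_lt1 UdS i j; set s := Num.sqrt _.
have k_gt0 : 0 < (1 - a) / 2 by rewrite divr_gt0 //; lra.
have s_gt0 : 0 < s by rewrite sqrtr_gt0.
have e1a : 1 - a = 2 * s ^+ 2 by rewrite sqr_sqrtr ?ltW //; field.
rewrite (Vmx_of_sqr k_gt0 (PAPhalf_sqr a) UdS) mxE PAPhalf_entry -/s e1a.
by case: (i == j :> nat); field; rewrite gt_eqF.
Qed.

Lemma mul_tensmx1E (R : pzRingType) (m M p : nat) (K : 'M[R]_m) (z : 'M[R]_(m * M, p))
    (k : 'I_m) (j : 'I_M) (c : 'I_p) :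
  ((K *t (1%:M : 'M[R]_M)) *m z) (mxtens_index (k, j)) c =
  \sum_(l < m) K k l * z (mxtens_index (l, j)) c.
Proof.
rewrite mxE (reindex (@mxtens_index m M)) /=; last first.
  by exists (@mxtens_unindex m M) => i _; [apply: mxtens_indexK | apply: mxtens_unindexK].
rewrite (_ : \sum_(lj : 'I_m * 'I_M) _ = \sum_(l < m) \sum_(j' < M)
   (K *t (1%:M : 'M[R]_M)) (mxtens_index (k, j)) (mxtens_index (l, j')) *
   z (mxtens_index (l, j')) c); last by rewrite pair_bigA; apply: eq_bigr => -[].
apply: eq_bigr => l _; rewrite (bigD1 j) //= big1 ?addr0.
  by rewrite tensmxE mxE eqxx mulr1n mulr1.
by move=> j' j'j; rewrite tensmxE mxE eq_sym (negPf j'j) mulr0n mulr0 mul0r.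
Qed.

Lemma Ypart_entry (R : realType) (M : nat) (z : 'cV[R]_(4 * M)) (i : 'I_2) (j : 'I_M) :
  Ypart z (mxtens_index (i, j)) 0 = z (mxtens_index (rshift 2 i : 'I_4, j)) 0.
Proof.
rewrite /Ypart mxE castmxE /=; congr (z _ _); apply: val_inj => //=.
by rewrite mulnDl; ring.
Qed.

Section ExactDiffusionModes.
Variables (R : realType) (a mu s2 : R) (M : nat) (U S : 'M[R]_2).
Variables (Z : nat -> 'cV[R]_(4 * M)) (j : 'I_M).
Hypotheses (a_gt0 : 0 < a) (a_lt1 : a < 1) (UdS : eigdecomp (PAPhalf a) U S).
Hypothesis Z_rec : forall n, Z n.+1 = (Qd a mu s2 (Vmx U S) *t (1%:M : 'M[R]_M)) *m Z n.

Let c := 1 - mu * s2.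
Let s := Num.sqrt ((1 - a) / 2).
Let V := Vmx U S.
Let w n (i : 'I_2) : R := Z n (mxtens_index (lshift 2 i : 'I_(2 + 2), j)) 0.
Let y n (i : 'I_2) : R := Z n (mxtens_index (rshift 2 i : 'I_(2 + 2), j)) 0.

Lemma primal_rec n i :
  w n.+1 i = c * \sum_(l < 2) Abar a i l * w n l - 2 * \sum_(l < 2) V i l * y n l.
Proof.
rewrite /w Z_rec (@mul_tensmx1E _ (2 + 2)) (@big_split_ord _ _ _ 2 2) /= !big_ord2 /Qd.
rewrite !block_mxEul !block_mxEur !mxE -/c -/V -/(y n ord0) -/(y n ord_max); ring.
Qed.

Lemma dual_rec n i :
  y n.+1 i = c * \sum_(l < 2) (V *m Abar a) i l * w n l + \sum_(l < 2) Abar a i l * y n l.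
Proof.
rewrite /y Z_rec (@mul_tensmx1E _ (2 + 2)) (@big_split_ord _ _ _ 2 2) /= !big_ord2 /Qd.
rewrite -/c -/V; set VA := V *m Abar a.
rewrite !block_mxEdl !block_mxEdr !mxE -/(w n ord0) -/(w n ord_max); ring.
Qed.

(* The modes along (1,1) and (1,-1), eigenvectors of both [Abar a] and [V]. *)
Let wsum n := w n ord0 + w n ord_max.
Let wdiff n := w n ord0 - w n ord_max.
Let ysum n := y n ord0 + y n ord_max.
Let ydiff n := y n ord0 - y n ord_max.

Let V_entry := Vmx_entry a_gt0 a_lt1 UdS.

Lemma wsum_rec n : wsum n.+1 = c * wsum n.
Proof. by rewrite /wsum !primal_rec !big_ord2 !Abar_entry !V_entry /=; field. Qed.

Lemma wdiff_rec n : wdiff n.+1 = c * a * wdiff n + - (2 * s) * ydiff n.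
Proof.
by rewrite /wdiff /ydiff !primal_rec !big_ord2 !Abar_entry !V_entry /= -/s; field.
Qed.

Lemma ysum_rec n : ysum n.+1 = ysum n.
Proof.
rewrite /ysum !dual_rec !big_ord2 ![(V *m _) _ _]mxE !big_ord2.
by rewrite !Abar_entry !V_entry /=; field.
Qed.

Lemma ydiff_rec n : ydiff n.+1 = c * s * a * wdiff n + a * ydiff n.
Proof.
rewrite /ydiff /wdiff !dual_rec !big_ord2 ![(V *m _) _ _]mxE !big_ord2.
by rewrite !Abar_entry !V_entry /= -/s; field.
Qed.

Lemma ysum0_of_range :
  (exists x, Ypart (Z 0) = (V *t (1%:M : 'M[R]_M)) *m x) -> ysum 0 = 0.
Proof.
move=> [x Zx].
have y0E i : y 0 i = \sum_(l < 2) V i l * x (mxtens_index (l, j)) 0.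
  by rewrite /y -Ypart_entry Zx mul_tensmx1E.
by rewrite /ysum !y0E !big_ord2 !V_entry /=; ring.
Qed.

Lemma column_cvg0 : `|1 - mu * s2| < 1 ->
  (exists x, Ypart (Z 0) = (V *t (1%:M : 'M[R]_M)) *m x) ->
  forall k : 'I_(2 + 2), Z n (mxtens_index (k, j)) 0 @[n --> \oo] --> 0.
Proof.
move=> c_lt1 range k.
have wsum_cvg : wsum n @[n --> \oo] --> 0.
  apply: (@cvg0_perturbed_geometric _ c _ (fun=> 0) c_lt1); first exact: cvg_cst.
  by move=> n; rewrite addr0 wsum_rec.
have ysum_cvg : ysum n @[n --> \oo] --> 0.
  have -> : ysum = fun=> 0.
    by apply: funext; elim=> [|n IH]; [exact: ysum0_of_range | rewrite ysum_rec].
  exact: cvg_cst.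
have detE : c * a * a - - (2 * s) * (c * s * a) = c * a.
  have s2E : s ^+ 2 = (1 - a) / 2 by rewrite sqr_sqrtr // divr_ge0 // subr_ge0 ltW.
  by transitivity (c * a * (a + 2 * s ^+ 2)); [ring | rewrite s2E; field].
have [wdiff_cvg ydiff_cvg] : wdiff n @[n --> \oo] --> 0 /\ ydiff n @[n --> \oo] --> 0.
  apply: (system2_cvg0 wdiff_rec ydiff_rec).
  by rewrite detE; exact: schur_stable2_diffusion.
have [w0 w1] := cvg0_sum_diff wsum_cvg wdiff_cvg.
have [y0 y1] := cvg0_sum_diff ysum_cvg ydiff_cvg.
rewrite -(splitK k); case: (fintype.split k) => i /=; case: (ord2_cases i) => ->.
- exact: w0.
- exact: w1.
- exact: y0.
- exact: y1.
Qed.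

End ExactDiffusionModes.

Lemma mul_rV3E (F : pzRingType) (v : 'rV[F]_3) (A : 'M[F]_3) k :
  (v *m A) 0 k = v 0 (@Ordinal 3 0 isT) * A (@Ordinal 3 0 isT) k
               + v 0 (@Ordinal 3 1 isT) * A (@Ordinal 3 1 isT) k
               + v 0 (@Ordinal 3 2 isT) * A (@Ordinal 3 2 isT) k.
Proof.
rewrite mxE !big_ord_recr big_ord0 /= add0r.
by congr (_ * _ + _ * _ + _ * _); congr (_ _ _); apply: val_inj.
Qed.

Lemma Ed_eigenvalue (R : realType) (a mu s2 : R) (lam : R[i]) :
  0 < a -> a < 1 -> eigenvalue (map_mx (fun x : R => x%:C) (Ed a mu s2)) lam ->
  lam = (1 - mu * s2)%:C \/
  lam ^+ 2 - ((1 - mu * s2) * a + a)%:C * lam + ((1 - mu * s2) * a)%:C = 0.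
Proof.
move=> a_gt0 a_lt1 /eigenvalueP [v vE v_nz].
have E k := congr1 (fun r : 'rV_3 => r 0 k) vE.
move: (E (@Ordinal 3 0 isT)) (E (@Ordinal 3 1 isT)) (E (@Ordinal 3 2 isT)).
rewrite /= !mul_rV3E !mxE /= !mulr0 !addr0 !add0r.
set v0 := v 0 _; set v1 := v 0 _; set v2 := v 0 _.
set c := 1 - mu * s2; set s := Num.sqrt _; set q := Num.sqrt _ => E0 E1 E2.
have [v0_0 | v0_nz] := eqVneq v0 0; last first.
  by left; apply: (mulIf v0_nz); rewrite -E0 mulrC.
right.
have sq : s * q = 1 - a.
  rewrite -sqrtrM; last by rewrite divr_ge0 //; lra.
  rewrite (_ : (1 - a) / 2 * (2 - 2 * a) = (1 - a) ^+ 2); last by field.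
  by rewrite sqrtr_sqr ger0_norm //; lra.
have v12_nz : (v1 != 0) || (v2 != 0).
  apply: contraNT v_nz; rewrite negb_or !negbK => /andP[/eqP v1_0 /eqP v2_0].
  apply/eqP/rowP => k; rewrite mxE.
  case: k => -[|[|[|//]]] hk; [rewrite -v0_0 | rewrite -v1_0 | rewrite -v2_0];
    by congr (v _ _); apply: val_inj.
have := left_eigen2_char v12_nz E1 E2.
rewrite -!rmorphM -rmorphD -rmorphB (_ : c * a * a - - q * (c * a * s) = c * a) //.
by rewrite mulNr opprK -mulrA [q * _]mulrC -!mulrA sq; ring.
Qed.

Theorem lemma6 (R : realType) (a s2 mu : R) (M : nat)
  (ha0 : 0 < a) (ha1 : a < 1) (hs2 : 0 < s2) (hM : (1 <= M)%N)
  (hmu0 : 0 < mu * s2) (hmu2 : mu * s2 < 2) :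
  (forall lam : R[i],
     eigenvalue (map_mx (fun x : R => x%:C) (Ed a mu s2)) lam -> `|lam| < 1)
  /\
  (forall (U S : 'M[R]_2) (Z : nat -> 'cV[R]_(4 * M)),
     eigdecomp (PAPhalf a) U S ->
     (forall i, Z i.+1 = (Qd a mu s2 (Vmx U S) *t (1%:M : 'M[R]_M)) *m Z i) ->
     (exists x : 'cV[R]_(2 * M), Ypart (Z 0%N) = (Vmx U S *t (1%:M : 'M[R]_M)) *m x) ->
     Z i @[i --> \oo] --> (0 : 'cV[R]_(4 * M))).
Proof.
have c_lt1 : `|1 - mu * s2| < 1 by rewrite ltr_norml; apply/andP; split; lra.
split=> [lam /(Ed_eigenvalue ha0 ha1) [-> | char0] | U S Z UdS Z_rec range].
- rewrite normc_def /= expr0n /= addr0 sqrtr_sqr.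
  by rewrite -[1 : R[i]]/(1%:C) ltcR.
- exact: quadratic_root_norm_lt1 (schur_stable2_diffusion c_lt1 ha0 ha1) char0.
apply: cvg0_mx_entries => i j; rewrite [j]ord1.
case: (mxtens_indexP i) => k l.
exact (column_cvg0 l ha0 ha1 UdS Z_rec c_lt1 range k).
Qed.
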